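(* Let $G$ be a connected Lie group with Lie algebra $\mathfrak{g}$ (identified with the left-invariant vector fields on $G$). The left-invariant connections $\nabla$ on $G$ which are projectively flat are in bijective correspondence with pairs $(\Psi,f)$ consisting of any Lie-algebra homomorphism $\Psi:\mathfrak{g}\to\mathfrak{sl}(\mathfrak{g})$ and any linear functional $f\in\mathfrak{g}^*$; the correspondence is given by $\nabla_uv=(\Psi u)v+f(u)v$ for $u,v\in\mathfrak{g}$. Moreover, the Ricci tensor $\rho$ of such $\nabla$ is given by $\rho(u,v)=f([u,v])$ for $u,v\in\mathfrak{g}$.
   Context: $\mathfrak{sl}(\mathfrak{g})$ denotes the Lie algebra of traceless linear endomorphisms of $\mathfrak{g}$ with the commutator bracket. A connection on $G$ is a connection in $TG$, possibly with torsion. Curvature: $R(u,v)w=\nabla_v\nabla_u w-\nabla_u\nabla_v w+\nabla_{[u,v]}w$; Ricci tensor: $\rho(u,v)=\mathrm{tr}[w\mapsto R(u,w)v]$. The connection is projectively flat if $R(u,v)w=\sigma(u,v)w$ for some $2$-form $\sigma$ and all $u,v,w$. *)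

(* The Lie algebra g of an n-dimensional real Lie group is
   modelled as the column vectors 'cV[R]_n with a bracket; endomorphisms of g
   are n x n matrices acting by A *m v (so composition = matrix product). *)
From HB Require Import structures.
From mathcomp Require Import all_boot all_order all_algebra.
From mathcomp Require Import reals.
Set Implicit Arguments. Unset Strict Implicit. Unset Printing Implicit Defensive.
Import Order.TTheory GRing.Theory Num.Theory.
Local Open Scope ring_scope.

Section Defs.
Variables (R : realType) (n : nat).
Notation V := 'cV[R]_n.

Definition bilinear_map (B : V -> V -> V) : Prop :=
  (forall (a : R) (u u' v : V), B (a *: u + u') v = a *: B u v + B u' v) /\
  (forall (a : R) (u v v' : V), B u (a *: v + v') = a *: B u v + B u v').

Definition lie_bracket (br : V -> V -> V) : Prop :=
  [/\ bilinear_map br,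
      (forall u : V, br u u = 0) &
      (forall u v w : V, br u (br v w) + br v (br w u) + br w (br u v) = 0)].

Definition linear_map (Psi : V -> 'M[R]_n) : Prop :=
  forall (a : R) (u u' : V), Psi (a *: u + u') = a *: Psi u + Psi u'.

Definition lie_hom_sl (br : V -> V -> V) (Psi : V -> 'M[R]_n) : Prop :=
  [/\ linear_map Psi,
      (forall u : V, \tr (Psi u) = 0) &
      (forall u v : V, Psi (br u v) = Psi u *m Psi v - Psi v *m Psi u)].

Definition functional (f : 'rV[R]_n) (u : V) : R := (f *m u) 0 0.

(* curvature R(u,v)w = nabla_v nabla_u w - nabla_u nabla_v w + nabla_[u,v] w,
   nabla u v = nabla_u v for left-invariant fields u v *)
Definition curvature (br nab : V -> V -> V) (u v w : V) : V :=
  nab v (nab u w) - nab u (nab v w) + nab (br u v) w.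

Definition two_form (s : V -> V -> R) : Prop :=
  [/\ (forall (a : R) (u u' v : V), s (a *: u + u') v = a * s u v + s u' v),
      (forall (a : R) (u v v' : V), s u (a *: v + v') = a * s u v + s u v') &
      (forall u v : V, s u v = - s v u)].

Definition proj_flat (br nab : V -> V -> V) : Prop :=
  exists s : V -> V -> R, two_form s /\
    forall u v w : V, curvature br nab u v w = s u v *: w.

Definition lin_trace (F : V -> V) : R :=
  \tr (\matrix_(i < n, j < n) (F (delta_mx j 0)) i 0).

Definition ricci (br nab : V -> V -> V) (u v : V) : R :=
  lin_trace (fun w => curvature br nab u w v).

Definition conn_of (Psi : V -> 'M[R]_n) (f : 'rV[R]_n) (u v : V) : V :=
  Psi u *m v + functional f u *: v.

End Defs.

From HB Require Import structures.
From mathcomp Require Import all_boot all_order all_algebra.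
From mathcomp Require Import reals.
Import Order.TTheory GRing.Theory Num.Theory.
Set Implicit Arguments. Unset Strict Implicit. Unset Printing Implicit Defensive.
Local Open Scope ring_scope.

(* A left-invariant connection is a linear map u |-> L u into End(g), and its
   curvature is R(u,v) = L v L u - L u L v + L [u,v].  Write L u = Psi u + f(u) id
   with f(u) = tr(L u) / n, so that Psi u is traceless.  Scalar shifts do not change
   commutators, so R(u,v) = s(u,v) id amounts to
   Psi [u,v] - [Psi u, Psi v] = (s(u,v) - f[u,v]) id; taking traces gives
   s(u,v) = f[u,v], hence Psi is a Lie algebra map into sl(g), and conversely.
   The Ricci tensor of a curvature of the form s(u,v) id is s itself. *)

Section LinearColumnMaps.
Variables (R : comPzRingType) (n : nat).
Local Notation V := 'cV[R]_n.

Lemma linear_sum_delta (W : lmodType R) (F : V -> W) :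
  linear F -> forall v, F v = \sum_i v i 0 *: F (delta_mx i 0).
Proof.
move=> F_lin v.
pose G : {linear V -> W} := HB.pack F (GRing.isLinear.Build _ _ _ _ F F_lin).
rewrite -[F v]/(G v) {1}[v]matrix_sum_delta linear_sum.
by apply: eq_bigr => i _; rewrite big_ord1 linearZ.
Qed.

Definition lin_cmx (F : V -> V) : 'M[R]_n := \matrix_(i, j) F (delta_mx j 0) i 0.

Lemma mul_lin_cmx (F : V -> V) : linear F -> forall v, lin_cmx F *m v = F v.
Proof.
move=> F_lin v; apply/matrixP => i k; rewrite ord1 (linear_sum_delta F_lin v).
by rewrite !mxE summxE; apply: eq_bigr => j _; rewrite !mxE mulrC.
Qed.

Lemma lin_cmx_mul (A : 'M[R]_n) : lin_cmx (mulmx A) = A.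
Proof. by apply/matrixP => i j; rewrite mxE -colE mxE. Qed.

Lemma mxtraceB (A B : 'M[R]_n) : \tr (A - B) = \tr A - \tr B.
Proof. exact: raddfB. Qed.

Lemma mulmx_colI (A B : 'M[R]_n) : (forall v : V, A *m v = B *m v) -> A = B.
Proof.
move=> eqAB; rewrite -[A]lin_cmx_mul -[B]lin_cmx_mul.
by apply/matrixP => i j; rewrite [LHS]mxE [RHS]mxE eqAB.
Qed.

End LinearColumnMaps.

Lemma commmx_add_scalar (R : comPzRingType) n (A B : 'M[R]_n) (a b : R) :
  (A + a%:M) *m (B + b%:M) - (B + b%:M) *m (A + a%:M) = A *m B - B *m A.
Proof.
have expand (M N : 'M[R]_n) (c d : R) :
    (M + c%:M) *m (N + d%:M) = M *m N + (d *: M + (c *: N + (c * d)%:M)).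
  by rewrite mulmxDl !mulmxDr mul_mx_scalar mul_scalar_mx scalar_mxM -addrA.
by rewrite !expand (addrCA (a *: B)) (mulrC b) [B *m A + _]addrC addrKA.
Qed.

Section ProjectivelyFlatConnections.
Variables (R : realType) (n : nat) (br : 'cV[R]_n -> 'cV[R]_n -> 'cV[R]_n).
Local Notation V := 'cV[R]_n.

Lemma lie_bracket_antisym : lie_bracket br -> forall u v, br u v = - br v u.
Proof.
case=> [[brl brr] br_alt _] u v; apply/eqP; rewrite -addr_eq0.
have brDl w : br (u + v) w = br u w + br v w by have := brl 1 u v w; rewrite !scale1r.
have brDr w : br w (u + v) = br w u + br w v by have := brr 1 w u v; rewrite !scale1r.
by have := br_alt (u + v); rewrite brDl !brDr !br_alt add0r addr0 => ->.
Qed.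

Lemma functional_scalar (f : 'rV[R]_n) : scalar (functional f).
Proof. by move=> a u v; rewrite /functional mulmxDr -scalemxAr !mxE. Qed.

Lemma two_form_bracket (f : 'rV[R]_n) :
  lie_bracket br -> two_form (fun u v => functional f (br u v)).
Proof.
move=> br_lie; have [[brl brr] _ _] := br_lie; split.
- by move=> a u u' v; rewrite brl functional_scalar.
- by move=> a u v v'; rewrite brr functional_scalar.
- by move=> u v; rewrite lie_bracket_antisym // /functional mulmxN mxE.
Qed.

Lemma lin_trace_scale (g : V -> R) (v : V) :
  scalar g -> lin_trace (fun w => g w *: v) = g v.
Proof.
move=> g_lin; rewrite /lin_trace /mxtrace (linear_sum_delta (W := R^o) g_lin).
by apply: eq_bigr => i _; rewrite !mxE mulrC.
Qed.

Lemma ricci_proj_flat (nab : V -> V -> V) (s : V -> V -> R) :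
  (forall u v w, curvature br nab u v w = s u v *: w) -> (forall u, scalar (s u)) ->
  forall u v, ricci br nab u v = s u v.
Proof.
move=> curvE s_lin u v; rewrite /ricci -(lin_trace_scale v (s_lin u)).
by congr (\tr _); apply/matrixP => i j; rewrite [LHS]mxE [RHS]mxE curvE.
Qed.

Lemma conn_ofE (Psi : V -> 'M[R]_n) (f : 'rV[R]_n) u v :
  conn_of Psi f u v = (Psi u + (functional f u)%:M) *m v.
Proof. by rewrite mulmxDl mul_scalar_mx. Qed.

Lemma curvature_mx (nab : V -> V -> V) (L : V -> 'M[R]_n) :
  (forall u w, nab u w = L u *m w) ->
  forall u v w, curvature br nab u v w = (L v *m L u - L u *m L v + L (br u v)) *m w.
Proof. by move=> nabE u v w; rewrite /curvature !nabE mulmxDl mulmxBl !mulmxA. Qed.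

Lemma curvature_conn_of (Psi : V -> 'M[R]_n) (f : 'rV[R]_n) :
  (forall u v, Psi (br u v) = Psi u *m Psi v - Psi v *m Psi u) ->
  forall u v w, curvature br (conn_of Psi f) u v w = functional f (br u v) *: w.
Proof.
move=> Psi_hom u v w; rewrite (curvature_mx (conn_ofE Psi f)) -opprB commmx_add_scalar.
by rewrite Psi_hom addrA addNr add0r mul_scalar_mx.
Qed.

Lemma proj_flat_conn_of (Psi : V -> 'M[R]_n) (f : 'rV[R]_n) :
  lie_bracket br -> lie_hom_sl br Psi -> proj_flat br (conn_of Psi f).
Proof.
move=> br_lie [_ _ Psi_hom]; exists (fun u v => functional f (br u v)).
by split; [exact: two_form_bracket | exact: curvature_conn_of].
Qed.

Lemma ricci_conn_of (Psi : V -> 'M[R]_n) (f : 'rV[R]_n) :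
  lie_bracket br -> lie_hom_sl br Psi ->
  forall u v, ricci br (conn_of Psi f) u v = functional f (br u v).
Proof.
move=> [[_ brr] _ _] [_ _ Psi_hom]; apply: ricci_proj_flat.
  exact: curvature_conn_of.
by move=> u a v v'; rewrite brr functional_scalar.
Qed.

Lemma conn_of_inj (Psi Psi' : V -> 'M[R]_n) (f f' : 'rV[R]_n) :
  (0 < n)%N -> (forall u, \tr (Psi u) = 0) -> (forall u, \tr (Psi' u) = 0) ->
  (forall u v, conn_of Psi f u v = conn_of Psi' f' u v) ->
  (forall u, Psi u = Psi' u) /\ f = f'.
Proof.
move=> n_gt0 trPsi trPsi' eq_conn.
have eq_mx u : Psi u + (functional f u)%:M = Psi' u + (functional f' u)%:M.
  by apply: mulmx_colI => v; rewrite -!conn_ofE.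
have eq_f u : functional f u = functional f' u.
  have := congr1 mxtrace (eq_mx u); rewrite !mxtraceD trPsi trPsi' !add0r !mxtrace_scalar.
  by move/eqP; rewrite eqr_pMn2r // => /eqP.
split=> [u | ]; first by have := eq_mx u; rewrite eq_f => /addIr.
by apply/rowP => j; have := eq_f (delta_mx j 0); rewrite /functional -!colE !mxE.
Qed.

End ProjectivelyFlatConnections.

Section ConnectionDecomposition.
Variables (R : realType) (n : nat) (nab : 'cV[R]_n -> 'cV[R]_n -> 'cV[R]_n).
Hypothesis nab_bil : bilinear_map nab.
Local Notation V := 'cV[R]_n.
Local Notation conn_mx u := (lin_cmx (nab u)).

Definition trace_form : 'rV[R]_n := \row_j (\tr (conn_mx (delta_mx j 0)) / n%:R).

Definition traceless_part (u : V) : 'M[R]_n := conn_mx u - (functional trace_form u)%:M.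

Lemma conn_mx_linear : linear (fun u => conn_mx u).
Proof. by move=> a u u'; apply/matrixP => i j; rewrite !mxE (proj1 nab_bil) !mxE. Qed.

Lemma mul_conn_mx u w : conn_mx u *m w = nab u w.
Proof. by apply: mul_lin_cmx => a v v'; apply: (proj2 nab_bil). Qed.

Lemma functional_trace_form u : functional trace_form u = \tr (conn_mx u) / n%:R.
Proof.
have tr_lin : scalar (fun u => \tr (conn_mx u)).
  by move=> a v v'; rewrite conn_mx_linear mxtraceD mxtraceZ.
rewrite /functional mxE (linear_sum_delta (W := R^o) tr_lin) mulr_suml.
by apply: eq_bigr => j _; rewrite mxE mulrAC [_ * u j 0]mulrC.
Qed.

Lemma conn_of_traceless_part u v : nab u v = conn_of traceless_part trace_form u v.
Proof. by rewrite conn_ofE subrK mul_conn_mx. Qed.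

Lemma traceless_part_linear : linear traceless_part.
Proof.
move=> a u u'; rewrite /traceless_part conn_mx_linear functional_scalar.
by rewrite raddfD /= -scale_scalar_mx scalerBr opprD addrACA.
Qed.

Hypothesis n_gt0 : (0 < n)%N.

Lemma trace_traceless_part u : \tr (traceless_part u) = 0.
Proof.
rewrite mxtraceB mxtrace_scalar functional_trace_form -[X in _ - X]mulr_natr.
rewrite divfK ?subrr //.
by rewrite pnatr_eq0 -lt0n.
Qed.

Lemma traceless_part_hom (br : V -> V -> V) : proj_flat br nab ->
  forall u v, traceless_part (br u v) =
    traceless_part u *m traceless_part v - traceless_part v *m traceless_part u.
Proof.
move=> [s [_ curvE]] u v.
have curv_mx :
    conn_mx v *m conn_mx u - conn_mx u *m conn_mx v + conn_mx (br u v) = (s u v)%:M.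
  apply: mulmx_colI => w; rewrite mul_scalar_mx -curvE.
  by rewrite (curvature_mx br (fun u w => esym (mul_conn_mx u w))).
have trace_form_br : functional trace_form (br u v) = s u v.
  have := congr1 mxtrace curv_mx; rewrite mxtraceD mxtraceB mxtrace_mulC subrr add0r.
  rewrite mxtrace_scalar functional_trace_form => ->.
  by rewrite -[X in X / _]mulr_natr mulfK // pnatr_eq0 -lt0n.
have shiftE x : traceless_part x = conn_mx x + (- functional trace_form x)%:M.
  by rewrite /traceless_part raddfN.
rewrite [traceless_part u]shiftE [traceless_part v]shiftE commmx_add_scalar.
rewrite /traceless_part trace_form_br -curv_mx (addrC _ (conn_mx (br u v))).
by rewrite opprD addrA subrr add0r opprB.
Qed.

Lemma traceless_part_sl (br : V -> V -> V) :
  proj_flat br nab -> lie_hom_sl br traceless_part.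
Proof.
move=> nab_flat; split; first exact: traceless_part_linear.
  exact: trace_traceless_part.
exact: traceless_part_hom.
Qed.

End ConnectionDecomposition.

Unset Implicit Arguments.

Theorem theorem7p2 (R : realType) (n : nat) (br : 'cV[R]_n -> 'cV[R]_n -> 'cV[R]_n) :
  lie_bracket br ->
  (forall (Psi : 'cV[R]_n -> 'M[R]_n) (f : 'rV[R]_n),
     lie_hom_sl br Psi ->
     proj_flat br (conn_of Psi f) /\
     (forall u v : 'cV[R]_n, ricci br (conn_of Psi f) u v = functional f (br u v))) /\
  (forall nab : 'cV[R]_n -> 'cV[R]_n -> 'cV[R]_n,
     bilinear_map nab -> proj_flat br nab ->
     exists (Psi : 'cV[R]_n -> 'M[R]_n) (f : 'rV[R]_n),
       [/\ lie_hom_sl br Psi,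
           (forall u v : 'cV[R]_n, nab u v = conn_of Psi f u v) &
           (forall (Psi' : 'cV[R]_n -> 'M[R]_n) (f' : 'rV[R]_n),
              lie_hom_sl br Psi' ->
              (forall u v : 'cV[R]_n, nab u v = conn_of Psi' f' u v) ->
              (forall u : 'cV[R]_n, Psi' u = Psi u) /\ f' = f)]).
Proof.
move=> br_lie; split=> [Psi f Psi_sl | nab nab_bil nab_flat].
  by split; [exact: proj_flat_conn_of | exact: ricci_conn_of].
exists (traceless_part nab), (trace_form nab).
have nabE := conn_of_traceless_part nab_bil.
have [n0 | n_gt0] := posnP n; last first.
  split=> // [|Psi' f' [_ trPsi' _] nabE']; first exact: traceless_part_sl.
  apply: conn_of_inj n_gt0 trPsi' (trace_traceless_part nab_bil n_gt0) _ => u v.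
  by rewrite -nabE' nabE.
subst n; split=> // [|Psi' f' _ _].
  split=> [||u v]; first exact: traceless_part_linear.
    by move=> u; rewrite /mxtrace big_ord0.
  by rewrite [LHS]flatmx0 [RHS]flatmx0.
by split=> [u|]; [rewrite [LHS]flatmx0 [RHS]flatmx0 | rewrite [LHS]thinmx0 [RHS]thinmx0].
Qed.
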